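(* Let $k$ be a field containing all $m$-th roots of unity, with $p\nmid m$ if $\operatorname{char}(k)=p>0$. Let $\mathcal A$ be a perfect $k$-algebra, $S$ a commutative associative unital $k$-algebra, $\sigma_1\in\operatorname{Aut}(\mathcal A)$, $\sigma_2\in\operatorname{Aut}(S)$ with $\sigma_1^m=\mathrm{id}$, $\sigma_2^m=\mathrm{id}$, suppose $S_{\bar 1}$ contains an invertible element $u$ of $S$, and suppose $\psi:C(\mathcal A)\otimes S\to C(\mathcal A\otimes S)$, $\gamma\otimes s\mapsto\gamma\otimes L_s$, is an isomorphism. Let $d\in\mathcal D((\mathcal A\otimes S)_{\bar 0})$ and let $D\in\mathcal D(\mathcal A\otimes S)_{\bar 0}$ satisfy $D|_{(\mathcal A\otimes S)_{\bar 0}}=d$. Let $\bar i,\bar s\in\mathbb Z_m$, $a_{\bar i}\in\mathcal A_{\bar i}$, $b_{-\bar i+\bar s}\in S_{-\bar i+\bar s}$. Then: (a) for every integer $n$ with $n\cdot 1_k\neq 0$, $$D(a_{\bar i}\otimes b_{-\bar i+\bar s})=d\big(a_{\bar i}\otimes u^{-\epsilon(\bar s)}b_{-\bar i+\bar s}\big)u^{\epsilon(\bar s)}+\epsilon(\bar s)(mn)^{-1}u^{\epsilon(\bar i)}\Big[u^{-mn}d\big(a_{\bar i}\otimes u^{-\epsilon(\bar i)+mn}\big)-d\big(a_{\bar i}\otimes u^{-\epsilon(\bar i)}\big)\Big]b_{-\bar i+\bar s};$$ in particular, if $\operatorname{char}(k)=0$ this holds for every nonzero integer $n$. (b) if $\operatorname{char}(k)=p>0$,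 then $D(a_{\bar i}\otimes b_{-\bar i+\bar s})=d(a_{\bar i}\otimes u^{-pr}b_{-\bar i+\bar s})u^{pr}$, where $r=\epsilon(\bar s\bar p^{-1})$ and $\bar p$ is the image of $p$ in $\mathbb Z_m$.
   Context: Algebras are $k$-vector spaces with bilinear product (not necessarily associative); perfect means $\mathcal A\mathcal A=\mathcal A$; $C(\mathcal A)$ is the centroid $\{\gamma\in\operatorname{End}(\mathcal A)\mid\gamma(xy)=\gamma(x)y=x\gamma(y)\}$; $\mathcal D$ denotes derivations. Fix a primitive $m$-th root of unity $\omega$; $\mathcal A_{\bar i}=\{a\mid\sigma_1(a)=\omega^ia\}$, $S_{\bar i}=\{s\mid\sigma_2(s)=\omega^is\}$, $(\mathcal A\otimes S)_{\bar i}=\sum_{\bar j}\mathcal A_{\bar i-\bar j}\otimes S_{\bar j}$, and $\mathcal D(\mathcal A\otimes S)_{\bar 0}$ is the set of derivations of $\mathcal A\otimes S$ mapping each $(\mathcal A\otimes S)_{\bar j}$ into itself. For $\bar i\in\mathbb Z_m$, $\epsilon(\bar i)$ is the unique representative of $\bar i$ in $\{0,1,\dots,m-1\}$. $\mathcal A\otimes S$ is an $S$-bimodule by $s'(a\otimes s)=(a\otimes s)s'=a\otimes ss'$; expressions like $x\,s$ or $s\,x$ for $x\in\mathcal A\otimes S$, $s\in S$ denote this action. *)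

From HB Require Import structures.
From mathcomp Require Import all_boot all_order all_algebra.
Set Implicit Arguments. Unset Strict Implicit. Unset Printing Implicit Defensive.
Import Order.TTheory GRing.Theory Num.Theory.
Local Open Scope ring_scope.

Section Defs.
Variable k : fieldType.

Definition bilin (U V W : lmodType k) (f : U -> V -> W) : Prop :=
  (forall v, linear (fun u => f u v)) /\ (forall u, linear (f u)).

Definition is_tensor (U V T : lmodType k) (t : U -> V -> T) : Prop :=
  bilin t /\
  forall (W : lmodType k) (f : U -> V -> W), bilin f ->
    (exists g : T -> W, linear g /\ forall u v, g (t u v) = f u v) /\
    (forall g1 g2 : T -> W, linear g1 -> linear g2 ->
       (forall u v, g1 (t u v) = f u v) -> (forall u v, g2 (t u v) = f u v) ->
       g1 =1 g2).

Definition centroid (V : lmodType k) (mul : V -> V -> V) (g : V -> V) : Prop :=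
  linear g /\ forall x y, g (mul x y) = mul (g x) y /\ g (mul x y) = mul x (g y).

Definition perfect (V : lmodType k) (mul : V -> V -> V) : Prop :=
  forall a : V, exists n (x y : 'I_n -> V), a = \sum_(i < n) mul (x i) (y i).

Definition alg_aut (V : lmodType k) (mul : V -> V -> V) (f : V -> V) : Prop :=
  linear f /\ bijective f /\ forall x y, f (mul x y) = mul (f x) (f y).

Definition ualg_aut (S : comUnitAlgType k) (f : S -> S) : Prop :=
  linear f /\ bijective f /\ f 1 = 1 /\ forall x y, f (x * y) = f x * f y.

(* eigen-component  V_z = { v | f v = w^z v }  (z taken modulo the order of w) *)
Definition eigc (V : lmodType k) (f : V -> V) (w : k) (z : int) (v : V) : Prop :=
  f v = (w ^ z) *: v.

(* graded component (A (x) S)_j = sum_l A_{j-l} (x) S_l *)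
Definition tgr (A : lmodType k) (S : comUnitAlgType k) (T : lmodType k)
  (tens : A -> S -> T) (s1 : A -> A) (s2 : S -> S) (w : k) (j : int) (x : T) : Prop :=
  exists n (f : 'I_n -> A) (g : 'I_n -> S) (e : 'I_n -> int),
    x = \sum_(i < n) tens (f i) (g i) /\
    forall i, eigc s1 w (j - e i) (f i) /\ eigc (s2 : S -> S) w (e i) (g i).

Definition derivation (V : lmodType k) (mul : V -> V -> V) (D : V -> V) : Prop :=
  linear D /\ forall x y, D (mul x y) = mul (D x) y + mul x (D y).

(* derivation of the subalgebra carried by P (d only matters on P) *)
Definition derivation_on (V : lmodType k) (mul : V -> V -> V) (P : V -> Prop)
  (d : V -> V) : Prop :=
  (forall x, P x -> P (d x)) /\
  (forall a x y, P x -> P y -> d (a *: x + y) = a *: d x + d y) /\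
  (forall x y, P x -> P y -> d (mul x y) = mul (d x) y + mul x (d y)).

End Defs.

(* For t in S, the defect x |-> D (x t) - D (x) t of D with respect to the
   S-action is in the centroid of A (x) S, hence S-linear because psi is onto;
   and t |-> defect is a derivation of S, so the defect of u^z is
   z u^(z-1) times the defect of u. If c = s mod m, then a (x) b = y u^c
   with y = a (x) u^(-c) b of degree 0, whence
   D (a (x) b) = d (y) u^c + c (defect of u at y) u^(c-1).
   For (a) take c = s: the defect of u is read off from d at the degree-0
   elements a (x) u^(-i) and a (x) u^(-i+mn). For (b) take c = pr, which
   vanishes in k. *)

From HB Require Import structures.
From mathcomp Require Import all_boot all_order all_algebra.
From mathcomp Require Import ring.
Import Order.TTheory GRing.Theory Num.Theory.
Local Open Scope ring_scope.
Set Implicit Arguments. Unset Strict Implicit.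

Section LinearFun.
Variables (k : fieldType) (U W : lmodType k) (f : U -> W).
Hypothesis f_lin : linear f.

Lemma linD x y : f (x + y) = f x + f y.
Proof. by have := f_lin 1 x y; rewrite !scale1r. Qed.

Lemma lin0 : f 0 = 0.
Proof. by apply: (addrI (f 0)); rewrite -linD !addr0. Qed.

Lemma linZ a x : f (a *: x) = a *: f x.
Proof. by have := f_lin a x 0; rewrite lin0 !addr0. Qed.

Lemma linN x : f (- x) = - f x.
Proof. by rewrite -scaleN1r linZ scaleN1r. Qed.

Lemma linB x y : f (x - y) = f x - f y.
Proof. by rewrite linD linN. Qed.

End LinearFun.

Lemma linear_comp (k : fieldType) (U V W : lmodType k) (f : V -> W) (g : U -> V) :
  linear f -> linear g -> linear (fun x => f (g x)).
Proof. by move=> f_lin g_lin a x y; rewrite g_lin f_lin. Qed.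

Lemma tensor_ext (k : fieldType) (U V T W : lmodType k) (t : U -> V -> T)
    (g1 g2 : T -> W) :
  is_tensor t -> linear g1 -> linear g2 ->
  (forall u v, g1 (t u v) = g2 (t u v)) -> g1 =1 g2.
Proof.
move=> [[t_linl t_linr] t_univ] g1_lin g2_lin eq_g.
have g1t_bilin : bilin (fun u v => g1 (t u v)).
  by split=> [v|u]; apply: linear_comp.
by case: (t_univ W _ g1t_bilin) => _; apply.
Qed.

Section TensorModule.
Variables (k : fieldType) (A : lmodType k) (S : comUnitAlgType k) (T : lmodType k).
Variables (tens : A -> S -> T) (smul : T -> S -> T).
Hypotheses (tens_univ : is_tensor tens)
  (smul_lin : forall t, linear (fun x => smul x t))
  (smul_tens : forall a b t, smul (tens a b) t = tens a (b * t)).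

Lemma tens_smul1 x : smul x 1 = x.
Proof.
move: x; apply: (tensor_ext (g2 := id) tens_univ) => // a b.
by rewrite smul_tens mulr1.
Qed.

Lemma tens_smulA x t t' : smul (smul x t) t' = smul x (t * t').
Proof.
move: x; apply: (tensor_ext (g1 := fun x => smul (smul x t) t')
  (g2 := fun x => smul x (t * t')) tens_univ) => //.
  exact: (linear_comp (smul_lin t') (smul_lin t)).
by move=> a b; rewrite !smul_tens mulrA.
Qed.

Variables (mulA : A -> A -> A) (mulT : T -> T -> T).
Hypotheses (mulT_bilin : bilin mulT)
  (mulT_tens : forall a a' b b', mulT (tens a b) (tens a' b') = tens (mulA a a') (b * b')).

Lemma tens_mulT_smull x y t : mulT (smul x t) y = smul (mulT x y) t.
Proof.
have [mulT_linl mulT_linr] := mulT_bilin.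
move: y; apply: (tensor_ext (g1 := mulT (smul x t))
  (g2 := fun y => smul (mulT x y) t) tens_univ) => //.
  exact: (linear_comp (smul_lin t) (mulT_linr x)).
move=> a' b'; move: x; apply: (tensor_ext (g1 := fun x => mulT (smul x t) (tens a' b'))
  (g2 := fun x => smul (mulT x (tens a' b')) t) tens_univ).
- exact: (linear_comp (mulT_linl _) (smul_lin t)).
- exact: (linear_comp (smul_lin t) (mulT_linl _)).
by move=> a b; rewrite !smul_tens !mulT_tens smul_tens mulrAC.
Qed.

Lemma tens_mulT_smulr x y t : mulT x (smul y t) = smul (mulT x y) t.
Proof.
have [mulT_linl mulT_linr] := mulT_bilin.
move: x; apply: (tensor_ext (g1 := fun x => mulT x (smul y t))
  (g2 := fun x => smul (mulT x y) t) tens_univ) => //.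
  exact: (linear_comp (smul_lin t) (mulT_linl y)).
move=> a b; move: y; apply: (tensor_ext (g1 := fun y => mulT (tens a b) (smul y t))
  (g2 := fun y => smul (mulT (tens a b) y) t) tens_univ).
- exact: (linear_comp (mulT_linr _) (smul_lin t)).
- exact: (linear_comp (smul_lin t) (mulT_linr _)).
by move=> a' b'; rewrite !smul_tens !mulT_tens smul_tens mulrA.
Qed.

Variables (C CS : lmodType k) (iota : C -> A -> A) (tC : C -> S -> CS) (psi : CS -> T -> T).
Hypotheses (tC_univ : is_tensor tC)
  (psi_linl : forall X1 X2 x (l : k), psi (l *: X1 + X2) x = l *: psi X1 x + psi X2 x)
  (psi_linr : forall X, linear (psi X))
  (psi_tens : forall c b a b', psi (tC c b) (tens a b') = tens (iota c a) (b * b'))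
  (psi_surj : forall g, centroid mulT g -> exists X, psi X =1 g).

Lemma tens_psi_smul X x t : psi X (smul x t) = smul (psi X x) t.
Proof.
move: x; apply: (tensor_ext (g1 := fun x => psi X (smul x t))
  (g2 := fun x => smul (psi X x) t) tens_univ).
- exact: (linear_comp (psi_linr X) (smul_lin t)).
- exact: (linear_comp (smul_lin t) (psi_linr X)).
move=> a b; move: X; apply: (tensor_ext (g1 := fun X => psi X (smul (tens a b) t))
  (g2 := fun X => smul (psi X (tens a b)) t) tC_univ) => [l X1 X2 | l X1 X2 |].
- exact: psi_linl.
- by rewrite psi_linl (linD (smul_lin t)) (linZ (smul_lin t)).
by move=> c b'; rewrite !smul_tens !psi_tens smul_tens mulrA.
Qed.

Lemma tens_centroid_smul g : centroid mulT g -> forall x t, g (smul x t) = smul (g x) t.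
Proof. by move=> /psi_surj[X psiX] x t; rewrite -!psiX tens_psi_smul. Qed.

End TensorModule.

Lemma pchar0_intr_eq0 (R : idomainType) (n : int) :
  [pchar R] =i pred0 -> (n%:~R == 0 :> R) = (n == 0).
Proof.
move=> R0; case: n => n; rewrite ?NegzE ?mulrNz ?oppr_eq0 -pmulrn ((pcharf0P R).1 R0) //.
Qed.

Lemma mulr_expzA (R : comUnitRingType) (u : R) (z1 z2 : int) (t : R) :
  u \is a GRing.unit -> u ^ z1 * (u ^ z2 * t) = u ^ (z1 + z2) * t.
Proof. by move=> u_unit; rewrite mulrA exprzDr. Qed.

Section Grading.
Variables (k : fieldType) (w : k).
Hypothesis w_neq0 : w != 0.

Lemma eigc_shift (V : lmodType k) (f : V -> V) (m : nat) z q v :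
  w ^+ m = 1 -> eigc f w z v -> eigc f w (z + m%:Z * q) v.
Proof.
by move=> wm1; rewrite /eigc expfzDr // -exprz_exp (_ : w ^ m%:Z = 1) ?exp1rz ?mulr1.
Qed.

Lemma ualg_autXz (S : comUnitAlgType k) (f : S -> S) x z :
  ualg_aut f -> x \is a GRing.unit -> f (x ^ z) = f x ^ z.
Proof.
move=> [_ [_ [f1 fM]]] x_unit.
have fX n : f (x ^+ n) = f x ^+ n.
  by elim: n => [|n IH]; rewrite ?expr0 ?f1 // !exprS fM IH.
have fV y : y \is a GRing.unit -> f y^-1 = (f y)^-1.
  move=> y_unit; have fy_unit : f y \is a GRing.unit.
    by apply/unitrP; exists (f y^-1); rewrite -!fM mulrV // mulVr // f1.
  by apply: (mulrI fy_unit); rewrite -fM !mulrV // f1.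
case: z => n; first exact: fX.
rewrite NegzE -!invr_expz fV; last exact: unitrX.
by congr (_^-1); exact: fX.
Qed.

Lemma eigc_expz (S : comUnitAlgType k) (f : S -> S) u z :
  ualg_aut f -> u \is a GRing.unit -> eigc f w 1 u -> eigc f w z (u ^ z).
Proof.
move=> f_aut u_unit fu; rewrite /eigc ualg_autXz // fu expr1z.
case: z => n; first exact: exprZn.
rewrite NegzE -!invr_expz.
have -> : (w *: u) ^ n.+1%:Z = w ^ n.+1%:Z *: u ^ n.+1%:Z by exact: exprZn.
by rewrite invrZ ?unitrX // unitfE.
Qed.

Lemma eigcM (S : comUnitAlgType k) (f : S -> S) x y z1 z2 :
  ualg_aut f -> eigc f w z1 x -> eigc f w z2 y -> eigc f w (z1 + z2) (x * y).
Proof.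
move=> [_ [_ [_ fM]]] fx fy.
by rewrite /eigc fM fx fy -scalerAl -scalerAr scalerA expfzDr.
Qed.

End Grading.

Lemma tgr_tens (k : fieldType) (A : lmodType k) (S : comUnitAlgType k) (T : lmodType k)
    (tens : A -> S -> T) (s1 : A -> A) (s2 : S -> S) (w : k) (j e : int) a b :
  eigc s1 w (j - e) a -> eigc s2 w e b -> tgr tens s1 s2 w j (tens a b).
Proof. by move=> Ha Hb; exists 1%N, (fun=> a), (fun=> b), (fun=> e); rewrite big_ord1. Qed.

Section Defect.
Variables (k : fieldType) (S : comUnitAlgType k) (T : lmodType k).
Variables (mulT : T -> T -> T) (smul : T -> S -> T).
Hypotheses (mulT_bilin : bilin mulT) (smul_lin : forall t, linear (fun x => smul x t))
  (smul1 : forall x, smul x 1 = x)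
  (smulA : forall x t t', smul (smul x t) t' = smul x (t * t'))
  (mulT_smull : forall x y t, mulT (smul x t) y = smul (mulT x y) t)
  (mulT_smulr : forall x y t, mulT x (smul y t) = smul (mulT x y) t)
  (centroid_smul : forall g, centroid mulT g -> forall x t, g (smul x t) = smul (g x) t).
Variable D : T -> T.
Hypothesis D_der : derivation mulT D.

Definition defect (t : S) (x : T) := D (smul x t) - smul (D x) t.

Lemma defect_centroid t : centroid mulT (defect t).
Proof.
have [D_lin D_mul] := D_der; have [mulT_linl mulT_linr] := mulT_bilin.
split=> [a x y | x y].
  by rewrite /defect (smul_lin t) !D_lin (smul_lin t) scalerBr opprD addrACA.
split.
  rewrite /defect -[smul (mulT x y) t]mulT_smull !D_mul (linD (smul_lin t)).
  by rewrite -!mulT_smull (linB (mulT_linl y)) opprD addrACA subrr addr0.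
rewrite /defect -[smul (mulT x y) t]mulT_smulr !D_mul (linD (smul_lin t)).
by rewrite -!mulT_smulr (linB (mulT_linr x)) opprD addrACA subrr add0r.
Qed.

Lemma defect_smul t x t' : defect t (smul x t') = smul (defect t x) t'.
Proof. exact: centroid_smul (defect_centroid t) x t'. Qed.

Lemma D_smul t x : D (smul x t) = smul (D x) t + defect t x.
Proof. by rewrite /defect addrC subrK. Qed.

Lemma defect1 x : defect 1 x = 0.
Proof. by rewrite /defect !smul1 subrr. Qed.

Lemma defectM t t' x : defect (t * t') x = smul (defect t x) t' + smul (defect t' x) t.
Proof.
rewrite {1}/defect -smulA D_smul defect_smul D_smul (linD (smul_lin t')) smulA.
by rewrite addrC -addrA addKr.
Qed.

Lemma defect_expz u z x : u \is a GRing.unit ->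
  defect (u ^ z) x = z%:~R *: smul (defect u x) (u ^ (z - 1)).
Proof.
(* E (j + 1) = E j * u with u invertible, so E vanishes on all of int. *)
move=> u_unit.
pose E j := defect (u ^ j) x - j%:~R *: smul (defect u x) (u ^ (j - 1)).
have E_succ j : E (j + 1) = smul (E j) u.
  rewrite /E addrK (exprzDr u_unit j 1) expr1z defectM.
  rewrite [RHS](linB (smul_lin u)) [in RHS](linZ (smul_lin u)).
  rewrite smulA -[u in u ^ (j - 1) * u]expr1z -exprzDr // subrK intrD scalerDl scale1r.
  by rewrite opprD addrACA subrr addr0.
have smul_inj : injective (smul^~ u).
  by apply: (can_inj (g := smul^~ u^-1)) => y; rewrite smulA mulrV.
suff E0 : E z = 0 by apply/eqP; rewrite -subr_eq0; exact/eqP.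
elim/int_ind: z => [|n IH|n IH].
- by rewrite /E expr0z defect1 scale0r subr0.
- by rewrite intS addrC E_succ IH (lin0 (smul_lin u)).
apply: smul_inj; rewrite -E_succ (lin0 (smul_lin u)).
by rewrite intS opprD addrAC addNr add0r.
Qed.

Lemma D_smul_expz u c x : u \is a GRing.unit ->
  D (smul x (u ^ c)) = smul (D x) (u ^ c) + c%:~R *: smul (defect u x) (u ^ (c - 1)).
Proof. by move=> u_unit; rewrite D_smul defect_expz. Qed.

Lemma D_smul_formula u (c N : int) x t : u \is a GRing.unit -> N%:~R != 0 :> k ->
  D (smul x t) =
    smul (D (smul x (u ^ (- c) * t))) (u ^ c)
    + (c%:~R / N%:~R) *: smul (smul (D (smul x (u ^ N))) (u ^ (- N)) - D x) t.
Proof.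
move=> u_unit N_neq0.
have bracket : smul (D (smul x (u ^ N))) (u ^ (- N)) - D x
               = N%:~R *: smul (defect u x) (u ^ (-1)).
  rewrite D_smul_expz // (linD (smul_lin _)) (linZ (smul_lin _)) !smulA.
  rewrite -!exprzDr // subrr expr0z smul1 addrC addKr.
  by rewrite addrAC subrr add0r.
have -> : smul x t = smul (smul x (u ^ (- c) * t)) (u ^ c).
  by rewrite smulA mulrC mulr_expzA // subrr expr0z mul1r.
rewrite bracket D_smul_expz // defect_smul smulA (linZ (smul_lin t)) smulA.
rewrite scalerA mulfVK //; congr (_ + _ *: smul _ _).
by rewrite mulrC mulr_expzA // addrAC subrr add0r.
Qed.

Section HomogeneousElements.
Variables (A : lmodType k) (tens : A -> S -> T) (d : T -> T).
Variables (s1 : A -> A) (s2 : S -> S) (w : k) (m : nat) (u : S).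
Hypotheses (w_neq0 : w != 0) (wm1 : w ^+ m = 1) (s2_aut : ualg_aut s2)
  (u_unit : u \is a GRing.unit) (u_eig : eigc s2 w 1 u)
  (smul_tens : forall a b t, smul (tens a b) t = tens a (b * t))
  (D_deg0 : forall x, tgr tens s1 s2 w 0 x -> D x = d x).
Variables (i s : int) (a : A) (b : S).
Hypotheses (a_eig : eigc s1 w i a) (b_eig : eigc s2 w (s - i) b).

Let uz_eig z : eigc s2 w z (u ^ z) := eigc_expz w_neq0 z s2_aut u_unit u_eig.

Lemma D_tens_deg0 e q : eigc s2 w (m%:Z * q - i) e -> D (tens a e) = d (tens a e).
Proof.
move=> e_eig; apply: D_deg0; apply: tgr_tens e_eig.
have -> : 0 - (m%:Z * q - i) = i + m%:Z * (- q) by ring.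
exact: (eigc_shift w_neq0 (- q) wm1 a_eig).
Qed.

Lemma expzN_mul_eig c q : c = s + m%:Z * q -> eigc s2 w (m%:Z * (- q) - i) (u ^ (- c) * b).
Proof.
move=> ->; have -> : m%:Z * (- q) - i = - (s + m%:Z * q) + (s - i) by ring.
exact: (eigcM w_neq0 s2_aut (uz_eig _) b_eig).
Qed.

Let tens_ui t : tens a (u ^ (- i) * t) = smul (tens a (u ^ (- i))) t.
Proof. by rewrite smul_tens. Qed.

Lemma D_tens_homogeneous (n : int) : (m%:Z * n)%:~R != 0 :> k ->
  D (tens a b) =
    smul (d (tens a (u ^ (- s) * b))) (u ^ s)
    + (s%:~R / (m%:Z * n)%:~R) *:
        smul (smul (d (tens a (u ^ (- i + m%:Z * n)))) (u ^ (- (m%:Z * n)))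
              - d (tens a (u ^ (- i))))
             (u ^ i * b).
Proof.
move=> N_neq0; rewrite -(D_tens_deg0 (expzN_mul_eig (q := 0) _)); last by rewrite mulr0 addr0.
rewrite -(D_tens_deg0 (q := n)); last by rewrite addrC; exact: uz_eig.
rewrite -(D_tens_deg0 (q := 0)); last by rewrite mulr0 sub0r; exact: uz_eig.
have -> : tens a b = smul (tens a (u ^ (- i))) (u ^ i * b).
  by rewrite -tens_ui mulr_expzA // addNr expr0z mul1r.
have -> : tens a (u ^ (- s) * b) = smul (tens a (u ^ (- i))) (u ^ (- s) * (u ^ i * b)).
  by rewrite -tens_ui mulrCA (mulr_expzA (- i)) // addNr expr0z mul1r.
by rewrite (exprzDr u_unit) tens_ui; apply: D_smul_formula.
Qed.

Lemma D_tens_homogeneous_pchar c q : c = s + m%:Z * q -> c%:~R = 0 :> k ->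
  D (tens a b) = smul (d (tens a (u ^ (- c) * b))) (u ^ c).
Proof.
move=> c_eq c0; rewrite -(D_tens_deg0 (expzN_mul_eig c_eq)).
have -> : tens a b = smul (tens a (u ^ (- c) * b)) (u ^ c).
  by rewrite smul_tens mulrAC -exprzDr // addNr expr0z mul1r.
by rewrite D_smul_expz // c0 scale0r addr0.
Qed.

End HomogeneousElements.
End Defect.

Theorem lemma4p4
  (k : fieldType) (m : nat) (w : k)
  (Hw : m.-primitive_root w)
  (Hchar : forall p : nat, p \in [pchar k] -> ~~ (p %| m)%N)
  (* the algebra A *)
  (A : lmodType k) (mulA : A -> A -> A) (HmulA : bilin mulA) (Hperf : perfect mulA)
  (* the commutative associative unital algebra S *)
  (S : comUnitAlgType k)
  (* automorphisms of order dividing m *)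
  (s1 : A -> A) (Hs1 : alg_aut mulA s1) (Hs1m : forall a, iter m s1 a = a)
  (s2 : S -> S) (Hs2 : ualg_aut s2) (Hs2m : forall b, iter m s2 b = b)
  (u : S) (Hu : u \is a GRing.unit) (Hu1 : eigc s2 w 1 u)
  (* the tensor product T = A (x) S, its product and its S-module structure *)
  (T : lmodType k) (tens : A -> S -> T) (Htens : is_tensor tens)
  (mulT : T -> T -> T) (HmulT : bilin mulT)
  (HmulTt : forall a a' b b', mulT (tens a b) (tens a' b') = tens (mulA a a') (b * b'))
  (smul : T -> S -> T) (Hsmul : forall b, linear (fun x => smul x b))
  (Hsmult : forall a b b', smul (tens a b) b' = tens a (b * b'))
  (* the centroid C(A), given as a k-space C embedded in the maps A -> A *)
  (C : lmodType k) (iota : C -> A -> A)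
  (Hiota_lin : forall c1 c2 a (l : k), iota (l *: c1 + c2) a = l *: iota c1 a + iota c2 a)
  (Hiota_inj : forall c1 c2, iota c1 =1 iota c2 -> c1 = c2)
  (Hiota_cent : forall c, centroid mulA (iota c))
  (Hiota_surj : forall g, centroid mulA g -> exists c, iota c =1 g)
  (* the tensor product C(A) (x) S and the map psi *)
  (CS : lmodType k) (tC : C -> S -> CS) (HtC : is_tensor tC)
  (psi : CS -> T -> T)
  (Hpsi_lin : forall x1 x2 t (l : k), psi (l *: x1 + x2) t = l *: psi x1 t + psi x2 t)
  (Hpsi_end : forall x, linear (psi x))
  (Hpsi_def : forall c b a b', psi (tC c b) (tens a b') = tens (iota c a) (b * b'))
  (* psi is an isomorphism onto C(A (x) S) *)
  (Hpsi_inj : forall x1 x2, psi x1 =1 psi x2 -> x1 = x2)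
  (Hpsi_surj : forall g, centroid mulT g -> exists x, psi x =1 g)
  (* the derivations d and D *)
  (d : T -> T) (Hd : derivation_on mulT (tgr tens s1 s2 w 0) d)
  (D : T -> T) (HD : derivation mulT D)
  (HD0 : forall j x, tgr tens s1 s2 w j x -> tgr tens s1 s2 w j (D x))
  (HDd : forall x, tgr tens s1 s2 w 0 x -> D x = d x)
  (* homogeneous elements; i, s are the representatives eps(i), eps(s) in {0..m-1} *)
  (i s : 'I_m) (a : A) (b : S)
  (Ha : eigc s1 w (i%:Z) a) (Hb : eigc s2 w (s%:Z - i%:Z) b) :
  let F (n : int) :=
    D (tens a b) =
      smul (d (tens a (u ^ (- s%:Z) * b))) (u ^ (s%:Z))
      + ((s%:R : k) / ((m%:Z * n)%:~R)) *:
          smul (smul (d (tens a (u ^ (- i%:Z + m%:Z * n)))) (u ^ (- (m%:Z * n)))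
                - d (tens a (u ^ (- i%:Z))))
               (u ^ (i%:Z) * b) in
  (forall n : int, (n%:~R : k) != 0 -> F n) /\
  ([pchar k] =i pred0 -> forall n : int, n != 0 -> F n) /\
  (forall p : nat, p \in [pchar k] -> forall r : 'I_m, (r * p == s %[mod m])%N ->
     D (tens a b) = smul (d (tens a (u ^- (p * r)%N * b))) (u ^+ (p * r)%N)).
Proof.
move=> F.
have wm1 : w ^+ m = 1 := prim_expr_order Hw.
have w_neq0 : w != 0.
  apply/eqP => w0; move: wm1; rewrite w0 expr0n gtn_eqF ?(prim_order_gt0 Hw) //.
  by move/eqP; rewrite eq_sym oner_eq0.
have smul1 := tens_smul1 Htens Hsmul Hsmult.
have smulA := tens_smulA Htens Hsmul Hsmult.
have mulT_smull := tens_mulT_smull Htens Hsmul Hsmult HmulT HmulTt.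
have mulT_smulr := tens_mulT_smulr Htens Hsmul Hsmult HmulT HmulTt.
have cent_smul := tens_centroid_smul Htens Hsmul Hsmult HtC Hpsi_lin Hpsi_end Hpsi_def Hpsi_surj.
have Fa n : (m%:Z * n)%:~R != 0 :> k -> F n.
  exact: (D_tens_homogeneous HmulT Hsmul smul1 smulA mulT_smull mulT_smulr cent_smul HD
    w_neq0 wm1 Hs2 Hu Hu1 Hsmult HDd Ha Hb).
(* A primitive m-th root of unity already forces m != 0 in k. *)
have m_neq0 : m%:R != 0 :> k := prim_root_natf_neq0 Hw.
split; first by move=> n n_neq0; apply: Fa; rewrite intrM mulf_neq0.
split.
  by move=> k0 n n_neq0; apply: Fa; rewrite intrM mulf_neq0 // pchar0_intr_eq0.
move=> p p_char r /eqP rp_s; rewrite exprnN.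
have pr_eq : (p * r)%N = s%:Z + m%:Z * ((r * p) %/ m)%N :> int.
  by rewrite -PoszM -PoszD mulnC {1}(divn_eq (r * p)%N m) rp_s modn_small // addnC mulnC.
have pr_eq0 : (p * r)%N%:~R = 0 :> k by rewrite -pmulrn natrM (pcharf0 p_char) mul0r.
exact: (D_tens_homogeneous_pchar HmulT Hsmul smul1 smulA mulT_smull mulT_smulr cent_smul HD
  w_neq0 wm1 Hs2 Hu Hu1 Hsmult HDd Ha Hb pr_eq pr_eq0).
Qed.
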